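(* Let $\mathcal{B}$ and $\mathcal{B}'$ be the periodic $0$-th barcodes derived from periodic merge trees $\mathcal{M}$ and $\mathcal{M}'$. If $\mathcal{M}'$ splinters $\mathcal{M}$, then $\mathcal{B}'=\mathcal{B}$.
   Context: Each periodic merge tree is $\mathcal{M}(F,\Lambda)$ for a $d$-dimensional lattice $\Lambda\subseteq\mathbb{R}^d$ and a $\Lambda$-periodic filter $F$ on a $\Lambda$-periodic locally finite cell complex $K$ ($\sigma+u\in K$, $F(\sigma+u)=F(\sigma)$ for $u\in\Lambda$; $F(\sigma)\le F(\tau)$ for faces $\sigma$ of $\tau$): the merge tree of the quotient filter $F/\Lambda$ on the finite quotient complex $K/\Lambda$, i.e. the quotient of $\{(x,s): x\in(K/\Lambda)_s\}$ (sublevel sets) by $(x,s)\sim(y,t)$ iff $s=t$ and $x,y$ lie in the same component of $(K/\Lambda)_s$, with height $h$ (the $s$-coordinate); points are identified with components; $B$ covers $A$ if $h(A)\le h(B)$, $A\subseteq B$. Its frequency $\Phi(\Gamma)=\frac{\mathrm{vol}_p(\Lambda_\Gamma)}{\mathrm{vol}_d(\Lambda)}\nu_{d-p}R^{d-p}$, where, with $\phi\colon\mathbb{R}^d\to\mathbb{R}^d/\Lambda$ the projection, $\Lambda_\Gamma=\{u\in\Lambda:\gamma+u=\gamma\}$ for a component $\gamma$ of $\phi^{-1}(\Gamma)$, $p=\dim\Lambda_\Gamma$, $\mathrm{vol}_q$ is the $q$-volume of a unit cell ($\mathrm{vol}_0(\{0\})=1$), $\nu_q$ the volume of the unit $q$-ball.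 Monomials ordered by $tR^a<sR^b$ iff $a<b$, or $a=b$ and $t<s$. Interleaving distance: continuous maps $\varphi\colon\mathcal{M}\to\mathcal{M}'$, $\psi\colon\mathcal{M}'\to\mathcal{M}$ are $\varepsilon$-compatible if $h'\circ\varphi=h+\varepsilon$, $h\circ\psi=h'+\varepsilon$, $\psi\varphi(\Gamma)$ covers $\Gamma$, $\varphi\psi(\Gamma')$ covers $\Gamma'$, $\Phi'(\varphi(\Gamma))\le\Phi(\Gamma)$, $\Phi(\psi(\Gamma'))\le\Phi'(\Gamma')$; $d_I$ is the infimum of such $\varepsilon\ge 0$. $\mathcal{M}_\Gamma$ is the subtree of points covered by $\Gamma$. $\mathcal{M}'$ splinters $\mathcal{M}$ if there is a continuous surjection $\omega\colon\mathcal{M}'\to\mathcal{M}$ with $h\circ\omega=h'$ such that for every $\Gamma\in\mathcal{M}$ and all $A,B\in\omega^{-1}(\Gamma)$: $d_I(\mathcal{M}'_A,\mathcal{M}'_B)=0$, $\omega$ maps each of $\mathcal{M}'_A,\mathcal{M}'_B$ onto $\mathcal{M}_\Gamma$, and $\Phi'(A)=\Phi'(B)=\Phi(\Gamma)/|\omega^{-1}(\Gamma)|$. Periodic $0$-th barcode of $\mathcal{M}$: decompose $\mathcal{M}$ into beams by the elder rule: each point of minimal height (component appearing at a vertex) starts a beam, continuing through the points covering it; where two beams meet, the beam whose start has larger height ends (ties broken arbitrarily) and the other continues; the beam with globally minimal start continues to $+\infty$. An epoch is a maximal interval of a beam with constant frequency. For each epoch starting at $A$ and ending when entering $B$ (where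 the frequency changes or the beam ends; $h(B)=\infty$ if never), on a beam starting at $C$, with $\Phi(A)=s\,\nu_{d-p}R^{d-p}$, add bar $[h(C),h(B))$ with multiplicity $s$ and, if $h(A)>h(C)$, bar $[h(C),h(A))$ with multiplicity $-s$ to the $(d-p)$-ary barcode, the function $\beta_{d-p}\colon\mathbb{R}\times(-\infty,\infty]\to\mathbb{R}$ sending $(b,e)$ to the total multiplicity of its bars $[b,e)$. The periodic $0$-th barcode is $(\beta_0,\dots,\beta_d)$. *)

From HB Require Import structures.
From mathcomp Require Import all_boot all_order all_algebra.
From mathcomp Require Import all_classical all_reals.
From mathcomp Require Import ereal topology normedtype.
Set Implicit Arguments. Unset Strict Implicit. Unset Printing Implicit Defensive.
Import Order.TTheory GRing.Theory Num.Theory.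
Import numFieldNormedType.Exports.
Local Open Scope classical_set_scope.
Local Open Scope ring_scope.

Section PeriodicMergeTrees.
Variables (R : realType) (d : nat).
Local Notation V := 'rV[R]_d.

(** points of merge trees: (height s, Lambda-saturated preimage of a component) *)
Definition pt := (R * set V)%type.

Definition introw (p : nat) : set 'rV[R]_p :=
  [set z | forall i, z 0 i \is a Num.int].

Definition lat (Bm : 'M[R]_d) : set V := [set z *m Bm | z in @introw d].

Definition is_zbasis (L : set V) (p : nat) (W : 'M[R]_(p, d)) :=
  row_free W /\ L = [set z *m W | z in @introw p].

(** p-volume of a unit cell (vol_0({0}) = 1) and dimension of a lattice *)
Definition latvol (L : set V) : R :=
  xget 0 [set v | exists p (W : 'M[R]_(p, d)),
                    is_zbasis L W /\ v = Num.sqrt (\det (W *m W^T))].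
Definition latdim (L : set V) : nat :=
  xget 0%N [set p | exists W : 'M[R]_(p, d), is_zbasis L W].

Definition tr (S : set V) (u : V) : set V := [set x + u | x in S].

(** cell complex axioms (regular cell complex, closed cells, faces = subcells) *)
Definition cball (k : nat) : set 'rV[R]_k := [set x | `|x| <= 1].
Definition csphere (k : nat) : set 'rV[R]_k := [set x | `|x| = 1].

Definition proper_faces (K : set (set V)) (s : set V) : set V :=
  \bigcup_(t in [set t | K t /\ t `<=` s /\ t <> s]) t.

Definition open_cell (K : set (set V)) (s : set V) : set V :=
  s `\` proper_faces K s.

Definition cell_complex (K : set (set V)) : Prop :=
  [/\ (forall s, K s -> exists k (f : 'rV[R]_k -> V),
          [/\ {within @cball k, continuous f},
              (forall x y, @cball k x -> @cball k y -> f x = f y -> x = y),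
              f @` @cball k = s &
              f @` @csphere k = proper_faces K s]),
      (forall s t, K s -> K t -> s <> t ->
          open_cell K s `&` open_cell K t = set0) &
      (forall x : V, exists2 e : R, 0 < e &
          finite_set [set s | K s /\ s `&` ball x e !=set0])].

Definition periodic_filtered_complex (Bm : 'M[R]_d) (K : set (set V))
    (F : set V -> R) : Prop :=
  [/\ Bm \in unitmx,
      cell_complex K,
      (forall s u, K s -> lat Bm u -> K (tr s u) /\ F (tr s u) = F s),
      (forall s t, K s -> K t -> s `<=` t -> F s <= F t) &
      exists2 S : set (set V), finite_set S /\ S `<=` K &
        forall s, K s -> exists t u, [/\ S t, lat Bm u & s = tr t u]].

(** sublevel set (preimage in R^d of (K/Lambda)_s) *)
Definition sublevel (K : set (set V)) (F : set V -> R) (s : R) : set V :=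
  \bigcup_(c in [set c | K c /\ F c <= s]) c.

Definition comp K F (s : R) (x : V) : set V :=
  connected_component (sublevel K F s) x.

(** preimage under phi of the component of (K/Lambda)_s containing phi(x) *)
Definition ocomp (Bm : 'M[R]_d) K F (s : R) (x : V) : set V :=
  [set y | exists2 u, lat Bm u & tr (comp K F s x) u y].

Definition qmap Bm K F (x : V) (s : R) : pt := (s, ocomp Bm K F s x).

Definition mt_points Bm K F : set pt :=
  [set p | exists x, sublevel K F p.1 x /\ p.2 = ocomp Bm K F p.1 x].

(** quotient topology from {(x,s) : x in sublevel s} *)
Definition mt_open Bm K F (U : set pt) : Prop :=
  U `<=` mt_points Bm K F /\
  exists2 O : set (V * R), open O &
    forall x s, sublevel K F s x -> (U (qmap Bm K F x s) <-> O (x, s)).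

(** frequency, encoded as (s, k) standing for s * nu_k * R^k *)
Definition stab (Bm : 'M[R]_d) K F (p : pt) : set V :=
  [set u | lat Bm u /\ forall x, p.2 x -> tr (comp K F p.1 x) u = comp K F p.1 x].

Definition freq Bm K F (p : pt) : R * nat :=
  (latvol (stab Bm K F p) / latvol (lat Bm), (d - latdim (stab Bm K F p))%N).

(** monomial order: t R^a <= s R^b *)
Definition mle (m1 m2 : R * nat) : Prop :=
  (m1.2 < m2.2)%N \/ (m1.2 = m2.2 /\ m1.1 <= m2.1).

Record ftree := FTree {
  fpts : set pt;
  fopen : set pt -> Prop;
  ffreq : pt -> R * nat }.

Definition merge_tree Bm K F : ftree :=
  FTree (mt_points Bm K F) (mt_open Bm K F) (freq Bm K F).

Definition covers (Bp A : pt) : Prop := A.1 <= Bp.1 /\ A.2 `<=` Bp.2.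

Definition subtree (S : ftree) (G : pt) : ftree :=
  FTree [set A | fpts S A /\ covers G A]
        (fun U => exists2 U0, fopen S U0 &
                    U = U0 `&` [set A | fpts S A /\ covers G A])
        (ffreq S).

Definition cont (S S' : ftree) (f : pt -> pt) : Prop :=
  (forall x, fpts S x -> fpts S' (f x)) /\
  (forall U, fopen S' U -> fopen S (fpts S `&` f @^-1` U)).

Definition compatible (eps : R) (S S' : ftree) (phi psi : pt -> pt) : Prop :=
  [/\ cont S S' phi /\ cont S' S psi,
      (forall G, fpts S G -> (phi G).1 = G.1 + eps) /\
      (forall G, fpts S' G -> (psi G).1 = G.1 + eps),
      (forall G, fpts S G -> covers (psi (phi G)) G) /\
      (forall G, fpts S' G -> covers (phi (psi G)) G) &
      (forall G, fpts S G -> mle (ffreq S' (phi G)) (ffreq S G)) /\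
      (forall G, fpts S' G -> mle (ffreq S (psi G)) (ffreq S' G))].

(** d_I(S, S') = 0 : the infimum of compatible eps >= 0 is 0 *)
Definition dI_zero (S S' : ftree) : Prop :=
  forall delta : R, 0 < delta -> exists eps : R,
    [/\ 0 <= eps, eps < delta & exists phi psi, compatible eps S S' phi psi].

Definition splinters (S' S : ftree) : Prop :=
  exists om : pt -> pt,
    [/\ cont S' S om,
        (forall G, fpts S G -> exists2 A, fpts S' A & om A = G),
        (forall A, fpts S' A -> (om A).1 = A.1) &
        (forall G, fpts S G -> forall A Bq, fpts S' A -> fpts S' Bq ->
           om A = G -> om Bq = G ->
           [/\ dI_zero (subtree S' A) (subtree S' Bq),
               om @` fpts (subtree S' A) = fpts (subtree S G),
               om @` fpts (subtree S' Bq) = fpts (subtree S G) &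
               exists n : nat,
                 [/\ ([set A0 | fpts S' A0 /\ om A0 = G] #= `I_n)%card,
                     ffreq S' A = ((ffreq S G).1 / n%:R, (ffreq S G).2) &
                     ffreq S' Bq = ((ffreq S G).1 / n%:R, (ffreq S G).2)]])].

(** elder rule decomposition into beams: b G is the start of the beam through G *)
Definition leaf (S : ftree) (C : pt) : Prop :=
  fpts S C /\ forall A, fpts S A -> covers C A -> A = C.

Definition elder (S : ftree) (b : pt -> pt) : Prop :=
  forall G, fpts S G ->
    [/\ leaf S (b G), covers G (b G),
        (forall C, leaf S C -> covers G C -> (b G).1 <= C.1) &
        (forall G1, fpts S G1 -> covers G G1 -> covers G1 (b G) -> b G1 = b G)].

Definition seg (S : ftree) (b : pt -> pt) (A G : pt) : Prop :=
  [/\ fpts S G, covers G A, b G = b A &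
      forall G0, fpts S G0 -> covers G0 A -> covers G G0 -> ffreq S G0 = ffreq S A].

Definition epoch S b A : set pt := seg S b A.

Definition epoch_start (S : ftree) (b : pt -> pt) (A : pt) : Prop :=
  fpts S A /\ forall A0, fpts S A0 -> A0 <> A -> ~ seg S b A0 A.

Definition epoch_end S b A : \bar R :=
  ereal_sup [set (G.1)%:E | G in epoch S b A].

Definition barcode (S : ftree) (b : pt -> pt) (k : nat) (x : R) (e : \bar R) : R :=
  \sum_(A \in [set A | epoch_start S b A /\ (ffreq S A).2 = k])
    ((if ((b A).1 == x) && (epoch_end S b A == e) then (ffreq S A).1 else 0)
     - (if [&& (b A).1 == x, ((A.1)%:E == e) & (b A).1 < A.1]
        then (ffreq S A).1 else 0)).

End PeriodicMergeTrees.

From Pilot Require Import Defs.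
From HB Require Import structures.
From mathcomp Require Import all_boot all_order all_algebra.
From mathcomp Require Import all_classical all_reals.
From mathcomp Require Import ereal topology normedtype.
From mathcomp Require Import finmap lra zify.
Set Implicit Arguments. Unset Strict Implicit. Unset Printing Implicit Defensive.
Import Order.TTheory GRing.Theory Num.Theory.
Import numFieldNormedType.Exports.
Local Open Scope classical_set_scope.
Local Open Scope ring_scope.

(* The k-ary barcode is determined by the level weights W_k(x, t), the sum of
   the coefficients of Phi(G) over the points G at height t whose frequency has
   degree k and whose beam starts at height x.  An epoch starting at A adds its
   coefficient to W_k(x, t) exactly for t in [h(A), end), hence
   beta_k(x, +oo) = W_k(x, t) for t above all critical values,
   beta_k(x, e) = W_k(x, e - delta) - W_k(x, e) for x < e and delta small, and
   beta_k(x, e) = 0 for e <= x.  This only uses that merge trees of periodic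
   filtrations are tame: finitely many critical values (filter values of cells)
   between which points persist with unchanged frequency.
   Splintering preserves every W_k(x, t): omega preserves heights, the fibre
   over G has n points of frequency Phi(G)/n each, and since omega maps M'_A
   onto M_(omega A), the beams through A and omega A start at the same height. *)

Section CriticalValues.
Variable R : realType.
Implicit Types (s : seq R) (a t : R).

Definition crit_free s a t := forall c, c \in s -> ~ (a < c <= t).

Lemma crit_free_below s t c0 : c0 \in s -> c0 <= t ->
  exists2 c, c \in s & c <= t /\ crit_free s c t.
Proof.
move=> c0s c0t; pose m := \big[Num.max/c0]_(c <- s | c <= t) c.
have [ms mt] : m \in s /\ m <= t.
  rewrite /m big_seq_cond; elim/big_rec: _ => // c m1 /andP[cs ct] [m1s m1t].
  by rewrite maxEle; case: ifP.
exists m => //; split=> // c cs /andP[mc ct].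
have : c <= m by rewrite /m; exact: le_bigmax_seq.
by rewrite leNgt mc.
Qed.

Lemma crit_free_above s a : exists t, a < t /\ crit_free s a t.
Proof.
elim: s => [|c s [t [a_t H]]]; first by exists (a + 1); split=> //; lra.
have [/andP[ac ct]|nc] := boolP ((a < c) && (c <= t)).
- exists ((a + c) / 2); split; first lra.
  move=> c'; rewrite inE => /orP[/eqP->|/H Hc']; first lra.
  move=> /andP[h1 h2]; apply: Hc'; apply/andP; split=> //; lra.
- exists t; split=> // c'; rewrite inE => /orP[/eqP->|/H//]; exact/negP.
Qed.

Lemma gap_below s e : exists t0, t0 < e /\ forall c, c \in s -> ~ (t0 <= c < e).
Proof.
elim: s => [|c s [t [te H]]]; first by exists (e - 1); split=> //; lra.
have [/andP[ac ct]|nc] := boolP ((t <= c) && (c < e)).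
- exists ((c + e) / 2); split; first lra.
  move=> c'; rewrite inE => /orP[/eqP->|/H Hc']; first lra.
  move=> /andP[h1 h2]; apply: Hc'; apply/andP; split=> //; lra.
- exists t; split=> // c'; rewrite inE => /orP[/eqP->|/H//]; exact/negP.
Qed.

Lemma exists_gt_seq s : exists t, forall c, c \in s -> c < t.
Proof.
exists (\big[Num.max/0]_(c <- s) c + 1) => c cs.
have : c <= \big[Num.max/0]_(c <- s) c by exact: le_bigmax_seq.
lra.
Qed.

Lemma crit_le_of_crit_free s c a t : c \in s -> c <= t -> crit_free s a t -> c <= a.
Proof.
by move=> cs ct free; rewrite leNgt; apply/negP => ac; apply: (free c cs); lra.
Qed.

Lemma count_lt_strict s a t : (exists2 c, c \in s & a <= c < t) ->
  (count (< a) s < count (< t) s)%N.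
Proof.
elim: s => [[]//|c s IH] [c0]; rewrite inE /= => /orP[/eqP->|c0s] /andP[h1 h2].
- have : (count (< a) s <= count (< t) s)%N by apply: sub_count => y /=; lra.
  rewrite ltNge h1 h2 /=; lia.
- have := IH (ex_intro2 _ _ c0 c0s (introT andP (conj h1 h2))).
  case: (ltP c a) => ca; case: (ltP c t) => ct /=; lra || lia.
Qed.

Lemma epoch_bar_difference (s x r t0 a : R) (e : \bar R) :
  x <= a -> (a%:E < e)%E -> (forall e', e = e'%:E -> ~ (t0 <= e' < r)) ->
  ~ (t0 <= a < r) -> x < r -> t0 < r ->
  (if e == r%:E then s else 0) - (if (a%:E == r%:E) && (x < a) then s else 0) =
  (if (a <= t0) && (t0%:E < e)%E then s else 0) -
  (if (a <= r) && (r%:E < e)%E then s else 0).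
Proof.
move=> xa ae He Ha xr t0r; rewrite eqe.
have [at0|t0a] := boolP (a <= t0); last rewrite -ltNge in t0a.
- have -> : (a == r) = false by apply/negbTE; rewrite neq_lt; apply/orP; left; lra.
  have -> : a <= r by lra.
  rewrite /= subr0; case: e ae He => [e'| |] //= ae He.
  + rewrite !lte_fin eqe in ae *; have := He e' erefl => He'.
    have [->|ne] := eqVneq e' r; first by rewrite t0r ltxx subr0.
    have [et0|t0e] := boolP (e' < t0); last rewrite -leNgt in t0e.
    * have -> : (t0 < e') = false by apply/negbTE; rewrite -leNgt; lra.
      have -> : (r < e') = false by apply/negbTE; rewrite -leNgt; lra.
      by rewrite subr0.
    * have re : r < e'.
        rewrite lt_neqAle eq_sym ne /= leNgt; apply/negP => h; apply: He'; lra.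
      by rewrite re (lt_le_trans t0r (ltW re)) subrr.
  + by rewrite !ltry subrr.
- have ra : r <= a by rewrite leNgt; apply/negP => h; apply: Ha; lra.
  have -> : (e == r%:E) = false.
    by apply/negbTE; apply: contraTneq ae => ->; rewrite lte_fin -leNgt.
  have [ar|ar] := eqVneq a r; first by subst a; rewrite xr lexx /= ae.
  by have -> : a <= r = false by apply/negbTE; rewrite -ltNge lt_neqAle eq_sym ar ra.
Qed.

End CriticalValues.

Section Covers.
Variables (R : realType) (d : nat).
Implicit Types p q r : pt R d.

Lemma covers_refl p : covers p p.
Proof. by split. Qed.

Lemma covers_trans p q r : covers p q -> covers q r -> covers p r.
Proof.
by move=> [h1 s1] [h2 s2]; split; [exact: le_trans h2 h1|exact: subset_trans s2 s1].
Qed.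

Lemma covers_anti p q : covers p q -> covers q p -> p = q.
Proof.
case: p q => [p1 p2] [q1 q2] [/= h1 s1] [/= h2 s2].
by rewrite (@le_anti _ _ p1 q1) ?h1 ?h2 // (_ : p2 = q2) //; apply/seteqP; split.
Qed.

End Covers.

Record tame (R : realType) (d : nat) (T : ftree R d) (Cr : seq R) : Prop := Tame {
  tame_crit_below : forall p, fpts T p -> exists2 c, c \in Cr & c <= p.1;
  tame_level_finite : forall t, finite_set [set p | fpts T p /\ p.1 = t];
  tame_ancestor_unique : forall p q a, fpts T p -> fpts T q -> fpts T a ->
    p.1 = q.1 -> covers p a -> covers q a -> p = q;
  tame_ancestor : forall a t, fpts T a -> a.1 <= t ->
    exists p, [/\ fpts T p, p.1 = t & covers p a];
  tame_flat : forall p t, fpts T p -> crit_free Cr t p.1 -> crit_free Cr p.1 t ->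
    fpts T (t, p.2) /\ ffreq T (t, p.2) = ffreq T p }.

Lemma tame_sub (R : realType) d (T : ftree R d) (Cr0 Cr : seq R) :
  {subset Cr0 <= Cr} -> tame T Cr0 -> tame T Cr.
Proof.
move=> sub [h0 h1 h2 h3 h4]; split=> //.
- by move=> p fp; have [c cC cp] := h0 p fp; exists c => //; exact: sub.
- move=> p t fp free1 free2; apply: h4 => // c cC.
  + exact: free1 c (sub c cC).
  + exact: free2 c (sub c cC).
Qed.

Section TameTree.
Variables (R : realType) (d : nat) (T : ftree R d) (Cr : seq R).
Hypothesis tameT : tame T Cr.
Local Notation P := (pt R d).
Implicit Types (p q A G : P).

Lemma covers_same_height p q : fpts T p -> fpts T q -> p.1 = q.1 -> covers p q -> p = q.
Proof.
by move=> fp fq e c; apply: (tame_ancestor_unique tameT fp fq fq e c (covers_refl q)).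
Qed.

Lemma last_crit_below p : fpts T p ->
  exists2 c, c \in Cr & c <= p.1 /\ crit_free Cr c p.1.
Proof. by move=> /(tame_crit_below tameT) [c cC cp]; exact: crit_free_below cC cp. Qed.

Lemma tame_flat_down p c t : fpts T p -> crit_free Cr c p.1 -> c <= t -> t <= p.1 ->
  fpts T (t, p.2) /\ ffreq T (t, p.2) = ffreq T p.
Proof.
move=> fp free ct tp; apply: (tame_flat tameT) => // c' c'C h; last lra.
by apply: (free c' c'C); lra.
Qed.

Lemma tame_flat_up p t : fpts T p -> p.1 <= t -> crit_free Cr p.1 t ->
  fpts T (t, p.2) /\ ffreq T (t, p.2) = ffreq T p.
Proof. by move=> fp pt free; apply: (tame_flat tameT) => // c' c'C h; lra. Qed.

Lemma leaf_crit C : leaf T C -> C.1 \in Cr.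
Proof.
move=> [fC lC]; have [c cC [cle free]] := last_crit_below fC.
have [fq _] := tame_flat_down fC free (lexx c) cle.
by have := lC _ fq (conj cle (@subset_refl _ _)) => <-.
Qed.

Variable b : P -> P.
Hypothesis elder_b : elder T b.

Lemma beam_leaf G : fpts T G -> leaf T (b G).
Proof. by move=> /elder_b []. Qed.

Lemma beam_covered G : fpts T G -> covers G (b G).
Proof. by move=> /elder_b []. Qed.

Lemma beam_min G C : fpts T G -> leaf T C -> covers G C -> (b G).1 <= C.1.
Proof. by move=> /elder_b [] _ _ + _; apply. Qed.

Lemma beam_const G G1 : fpts T G -> fpts T G1 -> covers G G1 -> covers G1 (b G) ->
  b G1 = b G.
Proof. by move=> /elder_b [] _ _ _; apply. Qed.

Lemma beam_pts G : fpts T G -> fpts T (b G).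
Proof. by move=> /beam_leaf []. Qed.

Lemma beam_crit G : fpts T G -> (b G).1 \in Cr.
Proof. by move=> /beam_leaf /leaf_crit. Qed.

Local Notation seg := (seg T b).

Lemma seg_refl A : fpts T A -> seg A A.
Proof.
move=> fA; split=> // [|G0 fG0 c1 c2]; first exact: covers_refl.
by rewrite (covers_anti c1 c2).
Qed.

Lemma seg_freq A G : seg A G -> ffreq T G = ffreq T A.
Proof. by case=> fG cGA _; apply=> //; apply: covers_refl. Qed.

Lemma seg_trans A B G : fpts T A -> seg A B -> seg B G -> seg A G.
Proof.
move=> fA [fB cBA bBA HAB] [fG cGB bGB HBG]; split=> //.
- exact: covers_trans cGB cBA.
- by rewrite bGB.
move=> G0 fG0 cG0A cGG0; have [h|h] := leP G0.1 B.1.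
- have [Q [fQ Q1 cQG0]] := tame_ancestor tameT fG0 h.
  have QB : Q = B := tame_ancestor_unique tameT fQ fB fA Q1 (covers_trans cQG0 cG0A) cBA.
  by subst Q; apply: HAB.
- have [Q [fQ Q1 cQB]] := tame_ancestor tameT fB (ltW h).
  have QG0 : Q = G0 :=
    tame_ancestor_unique tameT fQ fG0 fA Q1 (covers_trans cQB cBA) cG0A.
  by subst Q; rewrite (HBG G0 fG0 cQB cGG0); apply: HAB => //; apply: covers_refl.
Qed.

Lemma seg_down A G t : fpts T A -> seg A G -> A.1 <= t -> t <= G.1 ->
  exists Q, [/\ fpts T Q, Q.1 = t, seg A Q & covers G Q].
Proof.
move=> fA [fG cGA bGA H] h1 h2.
have [Q [fQ Q1 cQA]] := tame_ancestor tameT fA h1.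
have [G' [fG' G'1 cG'Q]] : exists p, [/\ fpts T p, p.1 = G.1 & covers p Q].
  by apply: (tame_ancestor tameT) => //; rewrite Q1.
have G'G : G' = G := tame_ancestor_unique tameT fG' fG fA G'1 (covers_trans cG'Q cQA) cGA.
subst G'; exists Q; split=> //; split=> //.
- by rewrite (beam_const fG fQ cG'Q) ?bGA //; apply: covers_trans cQA (beam_covered fA).
- by move=> G0 fG0 c1 c2; apply: H => //; apply: covers_trans cG'Q c2.
Qed.

Lemma seg_up A G t : fpts T A -> seg A G -> G.1 <= t -> crit_free Cr G.1 t ->
  seg A (t, G.2).
Proof.
move=> fA [fG cGA bGA H] h free; have [fG' frG'] := tame_flat_up fG h free.
have cG'G : covers (t, G.2) G by split.
split=> //.
- exact: covers_trans cG'G cGA.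
- rewrite -bGA; apply/esym/(beam_const fG' fG cG'G).
  have [c1 c2] := beam_covered fG'; split=> //.
  by apply: crit_le_of_crit_free free; [apply: beam_crit|].
move=> G0 fG0 cG0A cG'G0; have [h'|h'] := leP G0.1 G.1.
- have [Q [fQ Q1 cQG0]] := tame_ancestor tameT fG0 h'.
  have QG : Q = G := tame_ancestor_unique tameT fQ fG fA Q1 (covers_trans cQG0 cG0A) cGA.
  by subst Q; apply: H.
- have free' : crit_free Cr G.1 G0.1.
    by move=> c cC hc; apply: (free c cC); case: cG'G0 => /= h2 _; lra.
  have [fQ frQ] := tame_flat_up fG (ltW h') free'.
  have QG0 : (G0.1, G.2) = G0 by apply: covers_same_height => //; split; case: cG'G0.
  by rewrite -QG0 frQ; apply: H => //; exact: covers_refl.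
Qed.

Lemma seg_from_last_crit A : fpts T A ->
  exists c, [/\ c \in Cr, c <= A.1, fpts T (c, A.2) & seg (c, A.2) A].
Proof.
move=> fA; have [c cC [cle free]] := last_crit_below fA.
have [fA' frA'] := tame_flat_down fA free (lexx c) cle.
have cAA' : covers A (c, A.2) by split.
exists c; split=> //; split=> //.
- apply/esym/(beam_const fA fA' cAA'); have [c1 c2] := beam_covered fA; split=> //=.
  by apply: crit_le_of_crit_free free; [apply: beam_crit|].
move=> [g1 g2] fG0 [/= h1 s1] [/= h2 s2]; rewrite frA'.
have -> : g2 = A.2 by apply/seteqP; split.
by have [_ ->] := tame_flat_down fA free h1 h2.
Qed.

Local Notation epoch_start := (epoch_start T b).
Local Notation epoch_end := (epoch_end T b).

Lemma epoch_start_crit A : epoch_start A -> A.1 \in Cr.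
Proof.
move=> [fA startA]; have [c [cC cle fA' sA']] := seg_from_last_crit fA.
have [<-|ne] := eqVneq c A.1; first by [].
by exfalso; apply: (startA _ fA') sA' => E; move: ne; rewrite -E eqxx.
Qed.

Lemma epoch_start_exists G0 : fpts T G0 -> exists A, epoch_start A /\ seg A G0.
Proof.
suff : forall n G, (count (< G.1) Cr < n)%N -> fpts T G ->
    exists A, epoch_start A /\ seg A G by apply.
elim=> [//|n IH] G hn fG.
have [[A1 [fA1 ne sA1]]|none] :=
    pselect (exists A1, [/\ fpts T A1, A1 <> G & seg A1 G]); last first.
  exists G; split; last exact: seg_refl.
  by split=> // A0 fA0 ne s; apply: none; exists A0.
have [c [cC cle fA2 sA2]] := seg_from_last_crit fA1.
have lt1 : A1.1 < G.1.
  case: (sA1) => _ [h _] _ _; rewrite lt_neqAle h andbT; apply/eqP => E.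
  by apply: ne; apply/esym/covers_same_height => //; case: sA1.
have /count_lt_strict hc : exists2 c0, c0 \in Cr & c <= c0 < G.1.
  by exists c => //; rewrite lexx /=; lra.
have [A [startA sA]] := IH (c, A1.2) (leq_trans hc hn) fA2.
have fA : fpts T A by case: startA.
by exists A; split=> //; apply: seg_trans (sA1) => //; apply: seg_trans sA2.
Qed.

Lemma epoch_start_unique A A' G : epoch_start A -> epoch_start A' ->
  seg A G -> seg A' G -> A = A'.
Proof.
wlog h : A A' / A.1 <= A'.1.
  move=> W sA sA' s s'; have [h|h] := leP A.1 A'.1; first exact: W.
  by apply/esym/W => //; apply: ltW.
move=> [fA startA] [fA' startA'] sA sA'.
have hA'G : A'.1 <= G.1 by case: (sA') => _ [].
have [Q [fQ Q1 sQ _]] := seg_down fA sA h hA'G.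
have QA' : Q = A'.
  apply: (tame_ancestor_unique tameT fQ fA' (beam_pts fA) Q1).
  - by case: (sQ) => _ _ bQ _; rewrite -bQ; exact: beam_covered.
  - case: (sA) => _ _ bG _; case: (sA') => _ _ bG' _.
    by rewrite -bG bG'; exact: beam_covered.
by subst Q; apply: contrapT => ne; exact: (startA' A fA ne sQ).
Qed.

Lemma in_epochP A t : fpts T A ->
  (A.1 <= t /\ (t%:E < epoch_end A)%E) <-> exists G, seg A G /\ G.1 = t.
Proof.
move=> fA; split.
- move=> [h1 /ereal_sup_gt [_ [G sG <-]]]; rewrite lte_fin => h2.
  by have [Q [fQ Q1 sQ _]] := seg_down fA sG h1 (ltW h2); exists Q.
- move=> [G [sG <-]]; split; first by case: (sG) => _ [].
  have [t' [h free]] := crit_free_above Cr G.1.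
  apply: (@lt_le_trans _ _ t'%:E); first by rewrite lte_fin.
  by apply: ereal_sup_ubound; exists (t', G.2); first exact: seg_up (ltW h) free.
Qed.

Lemma epoch_end_gt A : fpts T A -> (A.1%:E < epoch_end A)%E.
Proof.
by move=> fA; have [] := (in_epochP A.1 fA).2 (ex_intro _ A (conj (seg_refl fA) erefl)).
Qed.

Lemma epoch_end_crit A r : fpts T A -> epoch_end A = r%:E -> r \in Cr.
Proof.
move=> fA Er; apply: contrapT => /negP rC.
have Ar : A.1 < r by have := epoch_end_gt fA; rewrite Er lte_fin.
have [cA cAC cAle] := tame_crit_below tameT fA.
have [c0 c0C [c0r free]] := crit_free_below cAC (le_trans cAle (ltW Ar)).
have c0r' : c0 < r by rewrite lt_neqAle c0r andbT; apply: contraNneq rC => <-.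
pose t := Num.max c0 A.1.
have tr : t < r by rewrite /t gt_max c0r' Ar.
have [G [sG G1]] : exists G, seg A G /\ G.1 = t.
  by apply/(in_epochP t fA); rewrite Er lte_fin /t le_max lexx orbT.
have c0t : c0 <= t by rewrite /t le_max lexx.
have free' : crit_free Cr G.1 r.
  by move=> c cC hc; apply: (free c cC); move: hc; rewrite G1; lra.
have sG' : seg A (r, G.2) by apply: seg_up free' => //; rewrite G1 ltW.
have [_] := (in_epochP r fA).2 (ex_intro _ _ (conj sG' erefl)).
by rewrite Er lte_fin ltxx.
Qed.

Definition level_weight k x t :=
  \sum_(G \in [set G | fpts T G /\ G.1 = t /\ (ffreq T G).2 = k])
    (if (b G).1 == x then (ffreq T G).1 else 0).

Definition epoch_weight x t A :=
  if [&& (b A).1 == x, A.1 <= t & (t%:E < epoch_end A)%E] then (ffreq T A).1 else 0.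

Lemma epoch_start_finite : finite_set epoch_start.
Proof.
apply: (@sub_finite_set _ _ (\bigcup_(c in [set` Cr]) [set p | fpts T p /\ p.1 = c])).
- by move=> A sA; exists A.1; [exact: epoch_start_crit|split => //; case: sA].
- apply: bigcup_finite; first exact: finite_seq.
  by move=> c _; exact: (tame_level_finite tameT).
Qed.

Definition epoch_of G := xget G [set A | epoch_start A /\ seg A G].

Lemma epoch_ofP G : fpts T G -> epoch_start (epoch_of G) /\ seg (epoch_of G) G.
Proof.
move=> fG; apply: (@xgetPex _ G [set A | epoch_start A /\ seg A G]).
exact: (epoch_start_exists fG).
Qed.

Lemma epoch_of_bij k t :
  set_bij [set G | fpts T G /\ G.1 = t /\ (ffreq T G).2 = k]
          [set A | (epoch_start A /\ (ffreq T A).2 = k) /\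
                   (A.1 <= t /\ (t%:E < epoch_end A)%E)] epoch_of.
Proof.
split.
- move=> G [fG [Gt Gk]]; have [sA sAG] := epoch_ofP fG.
  have fA : fpts T (epoch_of G) by case: sA.
  split; first by split=> //; rewrite -(seg_freq sAG).
  by apply/(in_epochP t fA); exists G.
- move=> G1 G2 /set_mem [f1 [h1 _]] /set_mem [f2 [h2 _]] E.
  have [_ sA1] := epoch_ofP f1; have [sA2 sA2'] := epoch_ofP f2.
  rewrite E in sA1; have fA : fpts T (epoch_of G2) by case: sA2.
  by apply: (tame_ancestor_unique tameT f1 f2 fA); [rewrite h1 h2|case: sA1|case: sA2'].
- move=> A [[sA Ak] hA]; have fA : fpts T A by case: sA.
  have [G [sG Gt]] := (in_epochP t fA).1 hA; have fG : fpts T G by case: sG.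
  exists G; first by split=> //; split=> //; rewrite (seg_freq sG).
  by have [sA' sA'G] := epoch_ofP fG; exact: epoch_start_unique sA' sA sA'G sG.
Qed.

Lemma level_weightE k x t : level_weight k x t =
  \sum_(A \in [set A | epoch_start A /\ (ffreq T A).2 = k]) epoch_weight x t A.
Proof.
transitivity (\sum_(A \in [set A | (epoch_start A /\ (ffreq T A).2 = k) /\
                     (A.1 <= t /\ (t%:E < epoch_end A)%E)]) epoch_weight x t A).
  rewrite (reindex_fsbig epoch_of _ _ _ (epoch_of_bij k t)); apply: eq_fsbigr.
  move=> G /set_mem [fG [Gt _]]; have [sA sAG] := epoch_ofP fG.
  have fA : fpts T (epoch_of G) by case: sA.
  have [h1 h2] : (epoch_of G).1 <= t /\ (t%:E < epoch_end (epoch_of G))%E.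
    by apply/(in_epochP t fA); exists G.
  by rewrite /epoch_weight h1 h2 !andbT (seg_freq sAG); case: sAG => _ _ ->.
apply: fsbig_widen => [A []//|A [hA nA]]; rewrite /preimage /= /epoch_weight.
by case: ifP => // /and3P [_ h1 h2]; exfalso; apply: nA.
Qed.

Lemma barcode_pinfty k x tb : (forall c, c \in Cr -> c < tb) ->
  barcode T b k x +oo%E = level_weight k x tb.
Proof.
move=> Htb; rewrite level_weightE /barcode; apply: eq_fsbigr => A /set_mem [sA _].
have fA : fpts T A by case: sA.
rewrite /epoch_weight ltW ?Htb ?epoch_start_crit //= andbF subr0.
case: ((b A).1 == x) => //=.
have := epoch_end_gt fA; case E: (epoch_end A) => [r| |] //= _; last by rewrite ltry.
by rewrite lte_fin ltNge ltW ?Htb //; exact: epoch_end_crit E.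
Qed.

Lemma barcode_le k x r : r <= x -> barcode T b k x r%:E = 0.
Proof.
move=> rx; apply: fsbig1 => A [sA _]; have fA : fpts T A by case: sA.
have xA : (b A).1 <= A.1 by case: (beam_covered fA).
case: eqP => bx /=; last by rewrite subr0.
have -> : (epoch_end A == r%:E) = false.
  by apply/negbTE/eqP => E; have := epoch_end_gt fA; rewrite E lte_fin; lra.
have -> : (A.1%:E == r%:E) && ((b A).1 < A.1) = false.
  by apply/negbTE; rewrite eqe; apply/negP => /andP[/eqP h1 h2]; lra.
by rewrite subr0.
Qed.

Lemma barcode_gt k x r t0 : x < r -> t0 < r ->
  (forall c, c \in Cr -> ~ (t0 <= c < r)) ->
  barcode T b k x r%:E = level_weight k x t0 - level_weight k x r.
Proof.
move=> xr t0r gap; rewrite !level_weightE /barcode.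
rewrite -[X in _ + X]mulN1r mulr_fsumr -fsbig_split; last first.
  by apply: sub_finite_set epoch_start_finite => A [].
apply: eq_fsbigr => A /set_mem [sA _]; have fA : fpts T A by case: sA.
rewrite mulN1r /epoch_weight; case: eqP => bx /=; last by rewrite subr0.
rewrite -bx in xr *; apply: epoch_bar_difference => //.
- by case: (beam_covered fA).
- exact: epoch_end_gt.
- by move=> e' E; apply: gap; apply: epoch_end_crit E.
- by apply: gap; apply: epoch_start_crit.
Qed.

End TameTree.

Section Splinter.
Variables (R : realType) (d : nat) (T T' : ftree R d) (Cr : seq R).
Variables (b b' : pt R d -> pt R d) (om : pt R d -> pt R d).
Hypotheses (tameT : tame T Cr) (tameT' : tame T' Cr).
Hypotheses (elder_b : elder T b) (elder_b' : elder T' b').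

Definition fibre G := [set A | fpts T' A /\ om A = G].

Hypotheses (om_pts : forall A, fpts T' A -> fpts T (om A))
  (om_surj : forall G, fpts T G -> exists2 A, fpts T' A & om A = G)
  (om_height : forall A, fpts T' A -> (om A).1 = A.1)
  (om_subtree : forall A, fpts T' A ->
     om @` fpts (subtree T' A) = fpts (subtree T (om A)))
  (om_fibre : forall A, fpts T' A -> exists n : nat,
     (fibre (om A) #= `I_n)%card /\
     ffreq T' A = ((ffreq T (om A)).1 / n%:R, (ffreq T (om A)).2)).

Lemma splinter_beam_height A : fpts T' A -> (b' A).1 = (b (om A)).1.
Proof.
move=> fA; have fG := om_pts fA; apply: le_anti; apply/andP; split.
- have : fpts (subtree T (om A)) (b (om A)).
    by split; [exact: beam_pts elder_b _ fG|exact: beam_covered elder_b _ fG].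
  rewrite -om_subtree // => -[A1 [fA1 cA1] <-].
  have cA1b := beam_covered elder_b' fA1.
  apply: le_trans
    (beam_min elder_b' fA (beam_leaf elder_b' fA1) (covers_trans cA1 cA1b)) _.
  by rewrite om_height //; case: cA1b.
- have : fpts (subtree T (om A)) (om (b' A)).
    rewrite -om_subtree //; exists (b' A) => //.
    by split; [exact: beam_pts elder_b' _ fA|exact: beam_covered elder_b' _ fA].
  move=> [fB cB]; rewrite -(om_height (beam_pts elder_b' fA)).
  have cBb := beam_covered elder_b fB.
  apply: le_trans (beam_min elder_b fG (beam_leaf elder_b fB) (covers_trans cB cBb)) _.
  by case: cBb.
Qed.

Lemma fibre_finite G : fpts T G -> finite_set (fibre G).
Proof.
move=> fG; have [A fA <-] := om_surj fG.
by have [n [cn _]] := om_fibre fA; exists n.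
Qed.

Lemma fibre_freq G A : fibre G A ->
  ffreq T' A = ((ffreq T G).1 / (#|` fset_set (fibre G)|)%:R, (ffreq T G).2).
Proof.
move=> [fA <-]; have [n [cn ->]] := om_fibre fA.
by rewrite (card_fset_set cn).
Qed.

Lemma fibre_card_gt0 G : fpts T G -> (0 < #|` fset_set (fibre G)|)%N.
Proof.
move=> fG; have [A fA omA] := om_surj fG.
have : A \in fset_set (fibre G).
  rewrite in_fset_set; last exact: fibre_finite.
  exact: mem_set.
by rewrite cardfs_gt0; apply: contraTneq => ->.
Qed.

Variables (k : nat) (x : R).

Lemma fibre_weight G : fpts T G ->
  \sum_(A \in fibre G) (if (b' A).1 == x then (ffreq T' A).1 else 0) =
  (if (b G).1 == x then (ffreq T G).1 else 0).
Proof.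
move=> fG; transitivity (\sum_(A \in fibre G)
  (if (b G).1 == x then (ffreq T G).1 / (#|` fset_set (fibre G)|)%:R else 0)).
  apply: eq_fsbigr => A /set_mem fibA; have [fA omA] := fibA.
  by rewrite (splinter_beam_height fA) omA (fibre_freq fibA).
case: ifP => _; last by rewrite fsbig1.
rewrite fsbig_finite; last exact: fibre_finite.
rewrite big_const_seq count_predT iter_addr_0 -mulrnAr -[_^-1 *+ _]mulr_natr.
by rewrite mulVf ?mulr1 // pnatr_eq0 -lt0n fibre_card_gt0.
Qed.

Lemma level_weight_fibres t : level_weight T' b' k x t =
  \sum_(G \in [set G | fpts T G /\ G.1 = t /\ (ffreq T G).2 = k])
    \sum_(A \in fibre G) (if (b' A).1 == x then (ffreq T' A).1 else 0).
Proof.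
pose X := [set G | fpts T G /\ G.1 = t /\ (ffreq T G).2 = k].
pose X' := [set A | fpts T' A /\ A.1 = t /\ (ffreq T' A).2 = k].
have finX : finite_set X by apply: sub_finite_set (tame_level_finite tameT t) => G [? []].
have finX' : finite_set X'.
  by apply: sub_finite_set (tame_level_finite tameT' t) => G [? []].
pose w A := if (b' A).1 == x then (ffreq T' A).1 else 0.
transitivity (\sum_(A \in X') \sum_(G \in X) (if om A == G then w A else 0)).
  apply: eq_fsbigr => A /set_mem [fA [At Ak]].
  rewrite -(fsbig_widen [set om A]) ?fsbig_set1 ?eqxx //.
  - move=> _ ->; split; first exact: om_pts.
    by rewrite om_height // -Ak (fibre_freq (conj fA erefl)).
  - by move=> G [_ /= ne]; rewrite /preimage /=; case: eqP => // E; case: ne.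
rewrite exchange_fsbig //; apply: eq_fsbigr => G /set_mem [fG [Gt Gk]].
rewrite -(fsbig_widen (fibre G) X'); first last.
- by move=> A [[fA _] nfib]; rewrite /preimage /=; case: eqP => // E; case: nfib.
- move=> A [fA omA]; split=> //; split; first by rewrite -(om_height fA) omA.
  by rewrite (fibre_freq (conj fA omA)).
by apply: eq_fsbigr => A /set_mem [_ ->]; rewrite eqxx.
Qed.

End Splinter.

Lemma level_weight_splinter (R : realType) d (T T' : ftree R d) Cr b b' k x t :
  tame T Cr -> tame T' Cr -> elder T b -> elder T' b' -> splinters T' T ->
  level_weight T' b' k x t = level_weight T b k x t.
Proof.
move=> tameT tameT' elder_b elder_b' [om [[om_pts _] om_surj om_height om_fibre]].
have om_subtree A : fpts T' A -> om @` fpts (subtree T' A) = fpts (subtree T (om A)).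
  by move=> fA; have [_ -> _ _] := om_fibre _ (om_pts A fA) A A fA fA erefl erefl.
have om_freq A : fpts T' A -> exists n : nat,
    (fibre T' om (om A) #= `I_n)%card /\
    ffreq T' A = ((ffreq T (om A)).1 / n%:R, (ffreq T (om A)).2).
  move=> fA; have [_ _ _ [n [cn fr _]]] := om_fibre _ (om_pts A fA) A A fA fA erefl erefl.
  by exists n.
rewrite (level_weight_fibres b' tameT tameT' om_pts om_height om_freq).
apply: eq_fsbigr => G /set_mem [fG _].
exact: (fibre_weight elder_b elder_b' om_pts om_surj om_height om_subtree om_freq).
Qed.

Lemma cball_connected (R : realType) k : connected (@cball R k).
Proof.
have -> : @cball R k = \bigcup_(x in @cball R k) ((fun r : R => r *: x) @` `[0, 1]).
  apply/seteqP; split.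
  - move=> y cy; exists y => //; exists 1; last by rewrite scale1r.
    by rewrite /= in_itv /= lexx ler01.
  - move=> y [x cx [r r01 <-]]; move: r01; rewrite /= in_itv /= => /andP[r0 r1].
    by rewrite /cball /= normrZ ger0_norm //; apply: mulr_ile1.
apply: bigcup_connected.
- exists 0 => x cx; exists 0; last by rewrite scale0r.
  by rewrite /= in_itv /= lexx ler01.
- move=> x cx; apply: (connected_continuous_connected (@segment_connected R 0 1)).
  exact/continuous_subspaceT/scalel_continuous.
Qed.

Lemma cell_complex_connected (R : realType) d (K : set (set 'rV[R]_d)) s :
  cell_complex K -> K s -> connected s.
Proof.
move=> [cells _ _] Ks; have [k [f [fc _ <- _]]] := cells s Ks.
exact: connected_continuous_connected (@cball_connected R k) fc.
Qed.

Section PeriodicMergeTree.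
Variables (R : realType) (d : nat).
Local Notation V := 'rV[R]_d.
Variables (Bm : 'M[R]_d) (K : set (set V)) (F : set V -> R).

Lemma lat0 : lat Bm 0.
Proof. by exists 0; [move=> i; rewrite mxE rpred0|rewrite mul0mx]. Qed.

Lemma latB u v : lat Bm u -> lat Bm v -> lat Bm (u - v).
Proof.
move=> [z zi <-] [w wi <-]; exists (z - w); last by rewrite mulmxBl.
by move=> i; rewrite !mxE rpredB.
Qed.

Lemma latN u : lat Bm u -> lat Bm (- u).
Proof. by move=> hu; rewrite -sub0r; apply: latB => //; apply: lat0. Qed.

Lemma latD u v : lat Bm u -> lat Bm v -> lat Bm (u + v).
Proof. by move=> hu hv; rewrite -[v]opprK; apply: latB => //; apply: latN. Qed.

Lemma trP (S : set V) u y : tr S u y <-> S (y - u).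
Proof. by split=> [[z Sz <-]|h]; [rewrite addrK|exists (y - u); rewrite ?subrK]. Qed.

Lemma tr_connected (S : set V) u : connected S -> connected (tr S u).
Proof.
move=> cS; apply: (connected_continuous_connected cS).
apply/continuous_subspaceT => z.
by apply: continuousD; [move=> ?|exact: cst_continuous].
Qed.

Hypothesis K_periodic : forall s u, K s -> lat Bm u -> K (tr s u) /\ F (tr s u) = F s.

Lemma sublevel_tr t x u : lat Bm u -> sublevel K F t x -> sublevel K F t (x + u).
Proof.
move=> lu [c [Kc Fc] cx]; have [Kc' Fc'] := K_periodic Kc lu.
by exists (tr c u); [split=> //; rewrite Fc'|exists x].
Qed.

Lemma comp_tr_sub t y u : lat Bm u -> sublevel K F t y ->
  tr (Defs.comp K F t y) u `<=` Defs.comp K F t (y + u).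
Proof.
move=> lu sy; apply: connected_component_max.
- by exists y => //; apply: connected_component_refl.
- move=> z /trP h; have := sublevel_tr lu (connected_component_sub h).
  by rewrite subrK.
- by apply: tr_connected; apply: component_connected.
Qed.

Lemma comp_tr t x u : lat Bm u -> sublevel K F t x ->
  Defs.comp K F t (x + u) = tr (Defs.comp K F t x) u.
Proof.
move=> lu sx; apply/seteqP; split; last exact: comp_tr_sub.
move=> z h; apply/trP.
have := @comp_tr_sub t (x + u) (- u) (latN lu) (sublevel_tr lu sx).
by rewrite addrK; apply; apply/trP; rewrite opprK subrK.
Qed.

Lemma ocomp_tr t x u : lat Bm u -> sublevel K F t x ->
  ocomp Bm K F t (x + u) = ocomp Bm K F t x.
Proof.
move=> lu sx; rewrite /ocomp comp_tr //; apply/seteqP; split=> y [v lv /trP h].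
- by exists (u + v); [exact: latD|apply/trP; move/trP: h; rewrite opprD addrA addrAC].
- exists (v - u); first exact: latB.
  by apply/trP/trP; rewrite opprB addrA addrAC addrK.
Qed.

Lemma ocomp_self t x : sublevel K F t x -> ocomp Bm K F t x x.
Proof.
move=> sx; exists 0; first exact: lat0.
by apply/trP; rewrite subr0; apply: connected_component_refl.
Qed.

Lemma ocomp_comp t x y : Defs.comp K F t x y -> ocomp Bm K F t y = ocomp Bm K F t x.
Proof. by move=> h; rewrite /ocomp /Defs.comp (same_connected_component h). Qed.

Lemma ocomp_eq t x z : sublevel K F t x -> ocomp Bm K F t x z ->
  ocomp Bm K F t z = ocomp Bm K F t x.
Proof.
move=> sx [u lu /trP h].
have sz : sublevel K F t (z - u) := connected_component_sub h.
by rewrite -(subrK u z) ocomp_tr // (ocomp_comp h).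
Qed.

Lemma sublevel_le a t : a <= t -> sublevel K F a `<=` sublevel K F t.
Proof.
by move=> at_ y [c [Kc Fc] cy]; exists c => //; split=> //; apply: le_trans Fc at_.
Qed.

Variable S : set (set V).
Hypotheses (S_finite : finite_set S) (S_sub : S `<=` K)
  (S_cover : forall s, K s -> exists t u, [/\ S t, lat Bm u & s = tr t u])
  (K_connected : forall s, K s -> connected s).

Definition crit_values := [seq F s | s <- fset_set S].

Lemma filter_crit c : K c -> F c \in crit_values.
Proof.
move=> Kc; have [s [u [Ss lu ->]]] := S_cover Kc.
rewrite (K_periodic (S_sub Ss) lu).2; apply: map_f.
by rewrite in_fset_set //; exact: mem_set.
Qed.

Lemma sublevel_crit_free a t : a <= t -> crit_free crit_values a t ->
  sublevel K F t = sublevel K F a.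
Proof.
move=> at_ free; apply/seteqP; split; last exact: sublevel_le.
move=> y [c [Kc Fc] cy]; exists c => //; split=> //.
by rewrite leNgt; apply/negP => h; apply: (free _ (filter_crit Kc)); lra.
Qed.

(* Up to translation by the lattice, every level of the merge tree is hit by
   the components of the finitely many representative cells in [S]. *)
Lemma merge_tree_level_finite t :
  finite_set [set p | mt_points Bm K F p /\ p.1 = t].
Proof.
apply: (@sub_finite_set _ _ ((fun s => (t, ocomp Bm K F t (xget 0 s))) @` S));
  last exact: finite_image.
move=> [p1 p2] [[x /= [sx ->]] /= E]; subst p1.
case: sx => c [Kc Fc] cx; have [s [u [Ss lu cE]]] := S_cover Kc; subst c.
move/trP: cx => ys; exists s => //.
have Fs : F s <= t by rewrite -(K_periodic (S_sub Ss) lu).2.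
have ssub : s `<=` sublevel K F t.
  by move=> z sz; exists s => //; split=> //; apply: S_sub.
have h : Defs.comp K F t (x - u) (xget 0 s).
  apply: (connected_component_max ys ssub (K_connected (S_sub Ss))).
  by apply: xgetPex; exists (x - u).
by congr pair; rewrite (ocomp_comp h) -[in RHS](subrK u x) (ocomp_tr lu (ssub _ ys)).
Qed.

Lemma merge_tree_tame : tame (merge_tree Bm K F) crit_values.
Proof.
split.
- by move=> p [x [[c [Kc Fc] _] _]]; exists (F c) => //; exact: filter_crit.
- exact: merge_tree_level_finite.
- move=> [p1 p2] [q1 q2] [a1 a2] [x [sx /= ->]] [y [sy /= ->]] [z [sz /= ->]] /= pq.
  move=> [_ ca] [_ cb]; subst q1.
  have zx := ca _ (ocomp_self sz); have zy := cb _ (ocomp_self sz).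
  by congr pair; rewrite -(ocomp_eq sx zx) (ocomp_eq sy zy).
- move=> [a1 a2] t [z [sz /= ->]] /= at_.
  have sub : Defs.comp K F a1 z `<=` Defs.comp K F t z.
    apply: connected_component_max; first exact: connected_component_refl.
    + by move=> w /connected_component_sub /(sublevel_le at_).
    + exact: component_connected.
  exists (t, ocomp Bm K F t z); split=> //.
  + by exists z; split=> //; apply: sublevel_le sz.
  + by split=> //= y [u lu /trP h]; exists u => //; apply/trP/sub.
- move=> [p1 p2] t [x [sx /= ->]] free1 free2 /=.
  have E : sublevel K F t = sublevel K F p1.
    have [h|h] := leP t p1; first by rewrite (sublevel_crit_free h free1).
    by rewrite (sublevel_crit_free (ltW h) free2).
  split; first by exists x; split; rewrite /= ?E // /ocomp /Defs.comp E.
  by rewrite /freq /stab /Defs.comp /= E.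
Qed.

End PeriodicMergeTree.

Lemma periodic_merge_tree_tame (R : realType) d (Bm : 'M[R]_d) K F :
  periodic_filtered_complex Bm K F -> exists Cr, tame (merge_tree Bm K F) Cr.
Proof.
move=> [_ cellK K_periodic _ [S [S_finite S_sub] S_cover]].
exists (crit_values F S); apply: merge_tree_tame => //.
by move=> s; exact: cell_complex_connected.
Qed.

Unset Implicit Arguments.
Theorem mainTheorem13 (R : realType) (d : nat)
    (Bm Bm' : 'M[R]_d) (K K' : set (set 'rV[R]_d)) (F F' : set 'rV[R]_d -> R) :
  periodic_filtered_complex Bm K F ->
  periodic_filtered_complex Bm' K' F' ->
  splinters (merge_tree Bm' K' F') (merge_tree Bm K F) ->
  forall b b' : pt R d -> pt R d,
    elder (merge_tree Bm K F) b ->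
    elder (merge_tree Bm' K' F') b' ->
    forall (k : nat) (x : R) (e : \bar R), (k <= d)%N -> e <> -oo%E ->
      barcode (merge_tree Bm' K' F') b' k x e = barcode (merge_tree Bm K F) b k x e.
Proof.
move=> pfc pfc' spl b b' elder_b elder_b' k x e _ e_ninfty.
have [Cr1 tame1] := periodic_merge_tree_tame pfc.
have [Cr2 tame2] := periodic_merge_tree_tame pfc'.
pose Cr := Cr1 ++ Cr2.
have tameT : tame (merge_tree Bm K F) Cr.
  by apply: tame_sub tame1 => c; rewrite mem_cat => ->.
have tameT' : tame (merge_tree Bm' K' F') Cr.
  by apply: tame_sub tame2 => c; rewrite mem_cat orbC => ->.
have weightE t := level_weight_splinter k x t tameT tameT' elder_b elder_b' spl.
case: e e_ninfty => [r| |] // _.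
- have [xr|rx] := ltP x r; last first.
    by rewrite (barcode_le tameT elder_b) // (barcode_le tameT' elder_b').
  have [t0 [t0r gap]] := gap_below Cr r.
  rewrite (barcode_gt tameT elder_b k xr t0r gap).
  by rewrite (barcode_gt tameT' elder_b' k xr t0r gap) !weightE.
- have [tb Htb] := exists_gt_seq Cr.
  rewrite (barcode_pinfty tameT elder_b k x Htb).
  by rewrite (barcode_pinfty tameT' elder_b' k x Htb) weightE.
Qed.
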